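(* Consider $\min_u F(u)+G(u)$ under the assumptions below, and let $\{(y^t,z^t,x^t)\}$ be generated by the modified PR iteration with $\gamma\in(0,\frac{1}{12L_F})$. Then the sequence is bounded, and any cluster point $(\bar y,\bar z,\bar x)$ satisfies $\bar y=\bar z$ and $0\in\nabla F(\bar z)+\partial G(\bar z)$.
   Context: Assumptions: $F:\mathbb{R}^n\to\mathbb{R}$ is convex and differentiable with $\nabla F$ Lipschitz continuous with modulus at most $L_F>0$; $G:\mathbb{R}^n\to(-\infty,\infty]$ is proper, lower semicontinuous, and $\operatorname{Argmin}_u\{\tau G(u)+\frac12\|u-w\|^2\}$ is nonempty for every $w$ and every $\tau>0$; $F+G$ is coercive ($\liminf_{\|u\|\to\infty}(F+G)(u)=\infty$). Modified PR iteration: given $x^0$ and $\gamma\in(0,\frac1{12L_F})$, for $t=0,1,\dots$: $y^{t+1}=\operatorname{argmin}_y\{F(y)+\frac{5L_F}{2}\|y\|^2+\frac1{2\gamma}\|y-x^t\|^2\}$; $z^{t+1}\in\operatorname{Argmin}_z\{G(z)-\frac{5L_F}{2}\|z\|^2+\frac1{2\gamma}\|2y^{t+1}-x^t-z\|^2\}$; $x^{t+1}=x^t+2(z^{t+1}-y^{t+1})$. $\partial G$ is the limiting subdifferential: $v\in\partial G(x)$ iff there exist $x^t\to x$ with $G(x^t)\to G(x)$ and $v^t\to v$ such that $\liminf_{z\to x^t, z\ne x^t}\frac{G(z)-G(x^t)-\langle v^t,z-x^t\rangle}{\|z-x^t\|}\ge0$ for each $t$. *)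

From Stdlib Require Import Reals Lra.
From Stdlib Require Fin.
Open Scope R_scope.

Definition vec (n : nat) : Type := Fin.t n -> R.

Definition vadd {n} (u v : vec n) : vec n := fun i => u i + v i.
Definition vsub {n} (u v : vec n) : vec n := fun i => u i - v i.
Definition vscal {n} (a : R) (u : vec n) : vec n := fun i => a * u i.
Definition vzero {n} : vec n := fun _ => 0.

Fixpoint dot (n : nat) : vec n -> vec n -> R :=
  match n return vec n -> vec n -> R with
  | O => fun _ _ => 0
  | S m => fun u v => u Fin.F1 * v Fin.F1
                      + dot m (fun i => u (Fin.FS i)) (fun i => v (Fin.FS i))
  end.

Definition norm {n} (u : vec n) : R := sqrt (dot n u u).

(* Extended reals (-oo, +oo]: [Some a] is the real a, [None] is +oo. *)
Definition ereal := option R.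
Definition eplus (g : ereal) (c : R) : ereal := option_map (fun a => a + c) g.
Definition escale (tau : R) (g : ereal) : ereal := option_map (fun a => tau * a) g.
Definition ele (a b : ereal) : Prop :=
  match a, b with
  | _, None => True
  | None, Some _ => False
  | Some x, Some y => x <= y
  end.
Definition rlt_e (c : R) (g : ereal) : Prop :=
  match g with None => True | Some a => c < a end.

Definition is_argmin {n} (f : vec n -> ereal) (u : vec n) : Prop :=
  forall v, ele (f u) (f v).
Definition is_argmin_R {n} (f : vec n -> R) (u : vec n) : Prop :=
  forall v, f u <= f v.

Definition convex {n} (F : vec n -> R) : Prop :=
  forall x y l, 0 <= l <= 1 ->
    F (vadd (vscal l x) (vscal (1 - l) y)) <= l * F x + (1 - l) * F y.

Definition has_gradient {n} (F : vec n -> R) (gradF : vec n -> vec n) : Prop :=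
  forall x eps, 0 < eps -> exists delta, 0 < delta /\
    forall h, norm h < delta ->
      Rabs (F (vadd x h) - F x - dot n (gradF x) h) <= eps * norm h.

Definition lipschitz {n} (T : vec n -> vec n) (L : R) : Prop :=
  forall x y, norm (vsub (T x) (T y)) <= L * norm (vsub x y).

Definition proper {n} (G : vec n -> ereal) : Prop := exists x a, G x = Some a.

Definition lsc {n} (G : vec n -> ereal) : Prop :=
  forall x c, rlt_e c (G x) -> exists delta, 0 < delta /\
    forall y, norm (vsub y x) < delta -> rlt_e c (G y).

Definition coercive {n} (F : vec n -> R) (G : vec n -> ereal) : Prop :=
  forall M, exists r, forall u, r < norm u -> rlt_e M (eplus (G u) (F u)).

Definition converges {n} (s : nat -> vec n) (x : vec n) : Prop :=
  forall eps, 0 < eps -> exists N, forall t, (N <= t)%nat -> norm (vsub (s t) x) < eps.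

Definition frechet_subgrad {n} (G : vec n -> ereal) (x v : vec n) : Prop :=
  exists gx, G x = Some gx /\
    forall eps, 0 < eps -> exists delta, 0 < delta /\
      forall z, 0 < norm (vsub z x) < delta ->
        match G z with
        | None => True
        | Some gz => - eps * norm (vsub z x) <= gz - gx - dot n v (vsub z x)
        end.

Definition limiting_subgrad {n} (G : vec n -> ereal) (x v : vec n) : Prop :=
  exists (xs vs : nat -> vec n) (gx : R),
    G x = Some gx /\
    converges xs x /\
    (forall eps, 0 < eps -> exists N, forall t, (N <= t)%nat ->
        exists g, G (xs t) = Some g /\ Rabs (g - gx) < eps) /\
    converges vs v /\
    (forall t, frechet_subgrad G (xs t) (vs t)).

Definition cluster_point3 {n} (y z x : nat -> vec n) (yb zb xb : vec n) : Prop :=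
  exists phi : nat -> nat, (forall k, (phi k < phi (S k))%nat) /\
    converges (fun k => y (phi k)) yb /\
    converges (fun k => z (phi k)) zb /\
    converges (fun k => x (phi k)) xb.

From Stdlib Require Import Reals Lra Lia Psatz FunctionalExtensionality.
Open Scope R_scope.

(* With [x t] rewritten through the optimality condition of the y-step,
   x^t = y^{t+1} + gamma (grad F(y^{t+1}) + 5 L y^{t+1}), the z-step minimizes G plus the
   quadratic model <grad F(y^{t+1}), w - y^{t+1}> + kappa |w - y^{t+1}|^2, where
   kappa = 1/(2 gamma) - 5L/2.  The merit function
   Phi_t = F(y^t) + <grad F(y^t), z^t - y^t> + kappa |z^t - y^t|^2 + G(z^t)
   then decreases by at least L |y^{t+1} - y^t|^2 per step as long as gamma L < 1/12.
   Since Phi_t dominates (F + G)(z^t) + (kappa - L) |z^t - y^t|^2, coercivity bounds the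
   iterates and Phi is bounded below, so the y-steps, and with them z^t - y^t, vanish.
   Minimality of z^t makes -grad F(y^t) - 2 kappa (z^t - y^t) a proximal subgradient of G
   at z^t; along a convergent subsequence these converge to -grad F(zbar), and the values
   G(z^t) converge to G(zbar) by lower semicontinuity together with the same proximal
   inequality, which gives a limiting subgradient. *)

Lemma vec_ext {n} (u v : vec n) : (forall i, u i = v i) -> u = v.
Proof. intros; apply functional_extensionality; auto. Qed.

Lemma dot_comm n (u v : vec n) : dot n u v = dot n v u.
Proof. induction n; simpl; auto. rewrite IHn; ring. Qed.

Lemma dot_addl n (u v w : vec n) : dot n (vadd u v) w = dot n u w + dot n v w.
Proof. induction n; simpl. ring. unfold vadd in *. rewrite IHn. ring. Qed.

Lemma dot_subl n (u v w : vec n) : dot n (vsub u v) w = dot n u w - dot n v w.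
Proof. induction n; simpl. ring. unfold vsub in *. rewrite IHn. ring. Qed.

Lemma dot_scall n a (u w : vec n) : dot n (vscal a u) w = a * dot n u w.
Proof. induction n; simpl. ring. unfold vscal in *. rewrite IHn. ring. Qed.

Lemma dot_addr n (u v w : vec n) : dot n w (vadd u v) = dot n w u + dot n w v.
Proof. rewrite !(dot_comm n w), dot_addl; auto. Qed.

Lemma dot_subr n (u v w : vec n) : dot n w (vsub u v) = dot n w u - dot n w v.
Proof. rewrite !(dot_comm n w), dot_subl; auto. Qed.

Lemma dot_scalr n a (u w : vec n) : dot n w (vscal a u) = a * dot n w u.
Proof. rewrite !(dot_comm n w), dot_scall; auto. Qed.

Ltac dot_expand :=
  repeat rewrite ?dot_addl, ?dot_addr, ?dot_subl, ?dot_subr, ?dot_scall, ?dot_scalr.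

Lemma dot_ge0 n (u : vec n) : 0 <= dot n u u.
Proof. induction n; simpl. lra. specialize (IHn (fun i => u (Fin.FS i))). nra. Qed.

Lemma dot_eq0 n (u : vec n) : dot n u u = 0 -> u = vzero.
Proof.
  intros H; apply vec_ext; revert u H; induction n; intros u H i; [inversion i|].
  simpl in H. pose proof (dot_ge0 n (fun i => u (Fin.FS i))).
  assert (u Fin.F1 = 0) by nra.
  assert (dot n (fun i => u (Fin.FS i)) (fun i => u (Fin.FS i)) = 0) by nra.
  revert u H H0 H1 H2. pattern i. apply (Fin.caseS' i); intros; auto.
  apply (IHn (fun i => u (Fin.FS i))); auto.
Qed.

Lemma norm_ge0 n (u : vec n) : 0 <= norm u.
Proof. apply sqrt_pos. Qed.

Lemma norm_mul n (u : vec n) : norm u * norm u = dot n u u.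
Proof. apply sqrt_sqrt, dot_ge0. Qed.

Lemma norm_sq n (u : vec n) : norm u ^ 2 = dot n u u.
Proof. rewrite <- norm_mul; ring. Qed.

Lemma norm_le_of_sq n (u : vec n) a : 0 <= a -> dot n u u <= a * a -> norm u <= a.
Proof. intros. unfold norm. rewrite <- (sqrt_square a); auto. apply sqrt_le_1_alt; auto. Qed.

Lemma norm_lt_of_sq n (u : vec n) a : 0 < a -> dot n u u < a * a -> norm u < a.
Proof.
  intros. unfold norm. rewrite <- (sqrt_square a) by lra.
  apply sqrt_lt_1_alt. split; auto using dot_ge0.
Qed.

Lemma norm_eq0 n (u : vec n) : norm u = 0 -> u = vzero.
Proof. intros H. apply dot_eq0. rewrite <- norm_mul, H. ring. Qed.

Lemma norm_scal n a (u : vec n) : norm (vscal a u) = Rabs a * norm u.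
Proof.
  unfold norm. rewrite dot_scall, dot_scalr, <- Rmult_assoc, sqrt_mult_alt by nra.
  f_equal. apply sqrt_Rsqr_abs.
Qed.

Lemma dot_vzerol n (v : vec n) : dot n vzero v = 0.
Proof. induction n; simpl; [ring|]. unfold vzero in *. rewrite IHn. ring. Qed.

Lemma norm_vzero n : norm (@vzero n) = 0.
Proof. unfold norm. rewrite dot_vzerol. apply sqrt_0. Qed.

Lemma dot_le_norm_mul n (u v : vec n) : dot n u v <= norm u * norm v.
Proof.
  set (a := norm u); set (b := norm v).
  assert (Ha : 0 <= a) by apply norm_ge0. assert (Hb : 0 <= b) by apply norm_ge0.
  pose proof (dot_ge0 n (vsub (vscal b u) (vscal a v))) as Hsq.
  repeat rewrite ?dot_subl, ?dot_subr, ?dot_scall, ?dot_scalr in Hsq.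
  rewrite (dot_comm n v u), <- !norm_mul in Hsq. fold a b in Hsq.
  destruct (Req_dec (a * b) 0) as [Hab | Hab].
  - destruct (Rmult_integral _ _ Hab) as [Hz | Hz].
    + rewrite (norm_eq0 n u Hz), dot_vzerol. nra.
    + rewrite (dot_comm n u), (norm_eq0 n v Hz), dot_vzerol. nra.
  - nra.
Qed.

Lemma norm_add_le n (u v : vec n) : norm (vadd u v) <= norm u + norm v.
Proof.
  apply norm_le_of_sq. pose proof (norm_ge0 n u); pose proof (norm_ge0 n v); lra.
  dot_expand. rewrite (dot_comm n v u). pose proof (dot_le_norm_mul n u v).
  rewrite <- !norm_mul. nra.
Qed.

Lemma norm_sub_sym n (u v : vec n) : norm (vsub u v) = norm (vsub v u).
Proof. unfold norm. f_equal. dot_expand. rewrite (dot_comm n u v). ring. Qed.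

Lemma norm_sub_le n (a b c : vec n) : norm (vsub a c) <= norm (vsub a b) + norm (vsub b c).
Proof.
  replace (vsub a c) with (vadd (vsub a b) (vsub b c)). apply norm_add_le.
  apply vec_ext; intros; unfold vadd, vsub; ring.
Qed.

Lemma vsub_vzero n (u : vec n) : vsub u vzero = u.
Proof. apply vec_ext; intros; unfold vsub, vzero; ring. Qed.

Lemma norm_sub_eq0 n (u v : vec n) : norm (vsub u v) = 0 -> u = v.
Proof.
  intros H. apply vec_ext. intros i.
  pose proof (f_equal (fun w => w i) (norm_eq0 n _ H)). unfold vsub, vzero in *. lra.
Qed.

Section Limits.
Variable n : nat.
Implicit Types (s u : nat -> vec n) (a b : vec n).

Lemma converges_ext s u a : (forall t, s t = u t) -> converges s a -> converges u a.
Proof. intros E H eps He. destruct (H eps He) as [N HN]. exists N. intros t Ht. rewrite <- E; auto. Qed.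

Lemma converges_shift s a : converges (fun t => s (S t)) a -> converges s a.
Proof. intros H eps He. destruct (H eps He) as [N HN]. exists (S N). intros [|t] Ht; [lia|]. apply HN; lia. Qed.

Lemma converges_subseq s a (phi : nat -> nat) :
  (forall k, (phi k < phi (S k))%nat) -> converges s a -> converges (fun k => s (phi k)) a.
Proof.
  intros Hphi H eps He. destruct (H eps He) as [N HN]. exists N. intros k Hk. apply HN.
  assert (forall k, (k <= phi k)%nat) by (induction k0; [lia | specialize (Hphi k0); lia]).
  specialize (H0 k). lia.
Qed.

Lemma converges_unique s a b : converges s a -> converges s b -> a = b.
Proof.
  intros Ha Hb. apply norm_sub_eq0. pose proof (norm_ge0 n (vsub a b)) as H0.
  destruct H0 as [Hpos | ]; auto. exfalso. set (e := norm (vsub a b) / 2).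
  destruct (Ha e ltac:(unfold e; lra)) as [N1 H1]. destruct (Hb e ltac:(unfold e; lra)) as [N2 H2].
  specialize (H1 (N1 + N2)%nat ltac:(lia)). specialize (H2 (N1 + N2)%nat ltac:(lia)).
  pose proof (norm_sub_le n a (s (N1 + N2)%nat) b). rewrite norm_sub_sym in H1. unfold e in *. lra.
Qed.

Lemma converges_add s u a b :
  converges s a -> converges u b -> converges (fun t => vadd (s t) (u t)) (vadd a b).
Proof.
  intros Ha Hb eps He.
  destruct (Ha (eps / 2) ltac:(lra)) as [N1 H1]. destruct (Hb (eps / 2) ltac:(lra)) as [N2 H2].
  exists (N1 + N2)%nat. intros t Ht.
  replace (vsub (vadd (s t) (u t)) (vadd a b)) with (vadd (vsub (s t) a) (vsub (u t) b))
    by (apply vec_ext; intros; unfold vadd, vsub; ring).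
  pose proof (norm_add_le n (vsub (s t) a) (vsub (u t) b)).
  specialize (H1 t ltac:(lia)). specialize (H2 t ltac:(lia)). lra.
Qed.

Lemma converges_scal c s a : converges s a -> converges (fun t => vscal c (s t)) (vscal c a).
Proof.
  intros Ha eps He. pose proof (Rabs_pos c).
  destruct (Ha (eps / (Rabs c + 1)) ltac:(apply Rdiv_lt_0_compat; lra)) as [N HN].
  exists N. intros t Ht. specialize (HN t Ht).
  replace (vsub (vscal c (s t)) (vscal c a)) with (vscal c (vsub (s t) a))
    by (apply vec_ext; intros; unfold vscal, vsub; ring).
  rewrite norm_scal. apply Rmult_lt_compat_l with (r := Rabs c + 1) in HN; [|lra].
  replace ((Rabs c + 1) * (eps / (Rabs c + 1))) with eps in HN by (field; lra).
  pose proof (norm_ge0 n (vsub (s t) a)). nra.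
Qed.

Lemma converges_lipschitz (T : vec n -> vec n) L s a :
  lipschitz T L -> converges s a -> converges (fun t => T (s t)) (T a).
Proof.
  intros HT Ha eps He. pose proof (Rabs_pos L).
  destruct (Ha (eps / (Rabs L + 1)) ltac:(apply Rdiv_lt_0_compat; lra)) as [N HN].
  exists N. intros t Ht. specialize (HN t Ht). specialize (HT (s t) a).
  apply Rmult_lt_compat_l with (r := Rabs L + 1) in HN; [|lra].
  replace ((Rabs L + 1) * (eps / (Rabs L + 1))) with eps in HN by (field; lra).
  pose proof (norm_ge0 n (vsub (s t) a)). pose proof (Rle_abs L). nra.
Qed.

Lemma converges_vzero_le s u C :
  converges u vzero -> (forall t, norm (s t) <= C * norm (u t)) -> converges s vzero.
Proof.
  intros Hu Hle eps He. pose proof (Rabs_pos C).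
  destruct (Hu (eps / (Rabs C + 1)) ltac:(apply Rdiv_lt_0_compat; lra)) as [N HN].
  exists N. intros t Ht. specialize (HN t Ht). specialize (Hle t). rewrite vsub_vzero in *.
  apply Rmult_lt_compat_l with (r := Rabs C + 1) in HN; [|lra].
  replace ((Rabs C + 1) * (eps / (Rabs C + 1))) with eps in HN by (field; lra).
  pose proof (norm_ge0 n (u t)). pose proof (Rle_abs C). nra.
Qed.

Lemma converges_vzero_of_dot s : Un_cv (fun t => dot n (s t) (s t)) 0 -> converges s vzero.
Proof.
  intros H eps He. destruct (H (eps * eps) ltac:(nra)) as [N HN].
  exists N. intros t Ht. specialize (HN t Ht). rewrite vsub_vzero.
  unfold Rdist in HN. rewrite Rminus_0_r, Rabs_pos_eq in HN by apply dot_ge0.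
  apply norm_lt_of_sq; auto.
Qed.

Lemma converges_sub s u a b :
  converges s a -> converges u b -> converges (fun t => vsub (s t) (u t)) (vsub a b).
Proof.
  intros Ha Hb.
  assert (E : forall p q : vec n, vsub p q = vadd p (vscal (-1) q))
    by (intros; apply vec_ext; intros; unfold vsub, vadd, vscal; ring).
  rewrite E. apply converges_ext with (s := fun t => vadd (s t) (vscal (-1) (u t))).
  - intros t. symmetry. apply E.
  - apply converges_add; auto. apply converges_scal; auto.
Qed.

Lemma bounded_of_succ s : (exists M, forall t, norm (s (S t)) <= M) -> exists M, forall t, norm (s t) <= M.
Proof.
  intros [M HM]. exists (Rmax (norm (s 0%nat)) M).
  intros [|t]; [apply Rmax_l | eapply Rle_trans; [apply HM | apply Rmax_r]].
Qed.

End Limits.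

Lemma decrements_vanish (a d : nat -> R) m :
  (forall k, a (S k) <= a k - d k) -> (forall k, 0 <= d k) -> (forall k, m <= a k) ->
  Un_cv d 0.
Proof.
  intros Hstep Hd Hm. destruct (decreasing_cv a) as [l Hl].
  - intros k. specialize (Hstep k). specialize (Hd k). lra.
  - exists (- m). intros r [k ->]. unfold opp_seq. specialize (Hm k). lra.
  - intros eps He. destruct (Hl (eps / 2) ltac:(lra)) as [N HN]. exists N. intros k Hk.
    pose proof (HN k Hk) as H1. pose proof (HN (S k) ltac:(lia)) as H2.
    unfold Rdist in *. apply Rabs_def2 in H1. apply Rabs_def2 in H2.
    specialize (Hstep k). specialize (Hd k).
    rewrite Rminus_0_r, Rabs_pos_eq; lra.
Qed.

Lemma exists_small_scale b N delta : 0 < b -> 0 <= N -> 0 < delta ->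
  exists l, 0 < l <= b /\ l * N < delta.
Proof.
  intros Hb HN Hd. exists (Rmin b (delta / (N + 1))).
  assert (H1 : Rmin b (delta / (N + 1)) <= delta / (N + 1)) by apply Rmin_r.
  assert (H0 : 0 < delta / (N + 1)) by (apply Rdiv_lt_0_compat; lra).
  repeat split; [apply Rmin_glb_lt; lra | apply Rmin_l |].
  apply Rmult_le_compat_r with (r := N + 1) in H1; [|lra].
  replace (delta / (N + 1) * (N + 1)) with delta in H1 by (field; lra).
  pose proof (Rmin_glb_lt b _ 0 Hb H0). nra.
Qed.

Section LipschitzMaps.
Variables (n : nat) (T : vec n -> vec n) (L : R).
Hypothesis HT : lipschitz T L.

Lemma lipschitz_dot_sq a b :
  dot n (vsub (T a) (T b)) (vsub (T a) (T b)) <= L * L * dot n (vsub a b) (vsub a b).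
Proof.
  rewrite <- !norm_mul. pose proof (HT a b).
  pose proof (norm_ge0 n (vsub (T a) (T b))). pose proof (norm_ge0 n (vsub a b)). nra.
Qed.

Lemma lipschitz_dot a b : dot n (vsub (T a) (T b)) (vsub a b) <= L * dot n (vsub a b) (vsub a b).
Proof.
  eapply Rle_trans; [apply dot_le_norm_mul|]. rewrite <- norm_mul.
  pose proof (HT a b). pose proof (norm_ge0 n (vsub a b)). nra.
Qed.

End LipschitzMaps.

Section SmoothFunctions.
Variables (n : nat) (F : vec n -> R) (gradF : vec n -> vec n).
Hypothesis Hgrad : has_gradient F gradF.

(* Fermat's rule for [F] plus a function with an exact quadratic expansion at [a]. *)
Lemma argmin_gradient_eq a p C :
  (forall h, F a <= F (vadd a h) + dot n p h + C * dot n h h) -> vadd (gradF a) p = vzero.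
Proof.
  intros Hmin. set (g := vadd (gradF a) p). apply dot_eq0.
  destruct (Rle_lt_or_eq_dec 0 (dot n g g) (dot_ge0 n g)) as [Hpos|]; auto. exfalso.
  set (N := norm g). assert (HNN : N * N = dot n g g) by apply norm_mul.
  assert (HN : 0 < N) by (pose proof (norm_ge0 n g); fold N in H; nra).
  destruct (Hgrad a (N / 4) ltac:(lra)) as [delta [Hd Hdelta]].
  pose proof (Rabs_pos C) as HC.
  destruct (exists_small_scale (/ (4 * (Rabs C + 1))) N delta) as [s [[Hs0 Hs1] HsN]];
    [apply Rinv_0_lt_compat; lra | lra | auto |].
  set (h := vscal (- s) g).
  assert (Hh : norm h = s * N).
  { unfold h. rewrite norm_scal, Rabs_Ropp, Rabs_pos_eq by lra. reflexivity. }
  assert (Hgh : dot n (gradF a) h + dot n p h = - s * (N * N))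
    by (unfold h; rewrite <- dot_addl, dot_scalr; fold g; rewrite <- HNN; ring).
  assert (Hhh : dot n h h = s * s * (N * N)) by (unfold h; rewrite dot_scalr, dot_scall, <- HNN; ring).
  specialize (Hdelta h ltac:(lra)). rewrite Hh in Hdelta.
  specialize (Hmin h). rewrite Hhh in Hmin.
  pose proof (Rle_abs (F (vadd a h) - F a - dot n (gradF a) h)).
  assert (HsC : s * Rabs C <= / 4).
  { apply Rmult_le_compat_r with (r := Rabs C + 1) in Hs1; [|lra].
    replace (/ (4 * (Rabs C + 1)) * (Rabs C + 1)) with (/ 4) in Hs1 by (field; lra). nra. }
  assert (C * (s * s * (N * N)) <= / 4 * (s * (N * N))).
  { assert (HsNN : 0 <= s * (N * N)) by nra.
    apply Rle_trans with (Rabs C * (s * s * (N * N))).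
    - apply Rmult_le_compat_r; [nra | apply Rle_abs].
    - replace (Rabs C * (s * s * (N * N))) with ((s * Rabs C) * (s * (N * N))) by ring.
      apply Rmult_le_compat_r; auto. }
  nra.
Qed.

Hypothesis Hconv : convex F.

Lemma convex_gradient_le u v : F v + dot n (gradF v) (vsub u v) <= F u.
Proof.
  set (d := vsub u v). pose proof (norm_ge0 n d) as Hd0.
  enough (H : dot n (gradF v) d <= F u - F v) by lra.
  apply Rle_plus_epsilon. intros eps He.
  set (e' := eps / (norm d + 1)).
  assert (He' : 0 < e') by (apply Rdiv_lt_0_compat; lra).
  assert (He'd : e' * norm d <= eps).
  { unfold e'. apply (Rmult_le_reg_r (norm d + 1)); [lra|].
    replace (eps / (norm d + 1) * norm d * (norm d + 1)) with (eps * norm d) by (field; lra). nra. }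
  destruct (Hgrad v e' He') as [delta [Hd Hdelta]].
  destruct (exists_small_scale 1 (norm d) delta) as [l [[Hl0 Hl1] Hld]]; auto; [lra|].
  assert (Hstep : vadd v (vscal l d) = vadd (vscal l u) (vscal (1 - l) v))
    by (apply vec_ext; intros; unfold vadd, vscal, d, vsub; ring).
  specialize (Hdelta (vscal l d)).
  rewrite norm_scal, Rabs_pos_eq, dot_scalr, Hstep in Hdelta by lra.
  specialize (Hdelta Hld).
  pose proof (Hconv u v l (conj (Rlt_le _ _ Hl0) Hl1)) as Hc.
  pose proof (Rle_abs (- (F (vadd (vscal l u) (vscal (1 - l) v)) - F v - l * dot n (gradF v) d))) as Ha.
  rewrite Rabs_Ropp in Ha.
  assert (l * (dot n (gradF v) d - e' * norm d) <= l * (F u - F v)) by nra.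
  apply Rmult_le_reg_l in H; lra.
Qed.

Lemma convex_quadratic_lower_bound u :
  F vzero - / 2 * dot n (gradF vzero) (gradF vzero) - / 2 * dot n u u <= F u.
Proof.
  pose proof (convex_gradient_le u vzero). rewrite vsub_vzero in H.
  pose proof (dot_ge0 n (vadd (gradF vzero) u)) as H0. dot_expand.
  rewrite dot_addl, !dot_addr, (dot_comm n u (gradF vzero)) in H0. lra.
Qed.

Variable L : R.
Hypothesis Hlip : lipschitz gradF L.

Lemma smooth_upper_bound u v :
  F u <= F v + dot n (gradF v) (vsub u v) + L * dot n (vsub u v) (vsub u v).
Proof.
  pose proof (convex_gradient_le v u). pose proof (lipschitz_dot n gradF L Hlip u v).
  replace (vsub v u) with (vscal (-1) (vsub u v)) in H
    by (apply vec_ext; intros; unfold vscal, vsub; ring).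
  rewrite dot_scalr in H. rewrite dot_subl in H0. lra.
Qed.

End SmoothFunctions.

Section ProximalSubgradients.
Variables (n : nat) (G : vec n -> ereal).

Lemma argmin_eplus_finite (f : vec n -> R) z :
  proper G -> is_argmin (fun w => eplus (G w) (f w)) z -> exists gz, G z = Some gz.
Proof.
  intros [w [gw Hw]] Hz. specialize (Hz w). cbv beta in Hz. rewrite Hw in Hz.
  destruct (G z) as [gz|]; [eauto | contradiction].
Qed.

Lemma argmin_eplus_le (f : vec n -> R) z gz w gw :
  is_argmin (fun w => eplus (G w) (f w)) z -> G z = Some gz -> G w = Some gw ->
  gz + f z <= gw + f w.
Proof. intros Hz Ez Ew. specialize (Hz w). cbv beta in Hz. rewrite Ez, Ew in Hz. exact Hz. Qed.

Definition proximal_subgrad (z v : vec n) (c : R) : Prop :=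
  exists gz, G z = Some gz /\ forall w gw, G w = Some gw ->
    gz + dot n v (vsub w z) - c * dot n (vsub w z) (vsub w z) <= gw.

Lemma proximal_subgrad_of_model_min p a c z gz :
  G z = Some gz ->
  (forall w gw, G w = Some gw ->
     gz + dot n p (vsub z a) + c * dot n (vsub z a) (vsub z a)
     <= gw + dot n p (vsub w a) + c * dot n (vsub w a) (vsub w a)) ->
  proximal_subgrad z (vsub (vscal (-1) p) (vscal (2 * c) (vsub z a))) c.
Proof.
  intros Ez Hmin. exists gz. split; auto. intros w gw Ew. specialize (Hmin w gw Ew).
  enough (E : dot n (vsub (vscal (-1) p) (vscal (2 * c) (vsub z a))) (vsub w z)
                - c * dot n (vsub w z) (vsub w z)
              = dot n p (vsub z a) + c * dot n (vsub z a) (vsub z a)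
                - (dot n p (vsub w a) + c * dot n (vsub w a) (vsub w a))) by lra.
  dot_expand. rewrite (dot_comm n a z), (dot_comm n a w), (dot_comm n z w). ring.
Qed.

Lemma frechet_subgrad_of_proximal z v c : proximal_subgrad z v c -> frechet_subgrad G z v.
Proof.
  intros [gz [Ez Hprox]]. exists gz. split; auto. intros eps He. pose proof (Rabs_pos c).
  exists (eps / (Rabs c + 1)). split; [apply Rdiv_lt_0_compat; lra|]. intros w [Hw0 Hw1].
  destruct (G w) as [gw|] eqn:Ew; auto. specialize (Hprox w gw Ew).
  rewrite <- norm_mul in Hprox.
  apply Rmult_lt_compat_l with (r := Rabs c + 1) in Hw1; [|lra].
  replace ((Rabs c + 1) * (eps / (Rabs c + 1))) with eps in Hw1 by (field; lra).
  pose proof (Rle_abs c). nra.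
Qed.

Lemma prox_quadratic_lower_bound :
  proper G ->
  (exists u, is_argmin (fun u => eplus (escale 1 (G u)) (/ 2 * norm (vsub u vzero) ^ 2)) u) ->
  exists m, forall u gu, G u = Some gu -> m - / 2 * dot n u u <= gu.
Proof.
  intros Hprop [u0 Hu0].
  destruct (G u0) as [g0|] eqn:E0.
  2:{ exfalso. destruct Hprop as [w [gw Hw]]. specialize (Hu0 w). cbv beta in Hu0.
      rewrite E0, Hw in Hu0. contradiction. }
  exists (g0 + / 2 * dot n u0 u0). intros u gu Eu.
  specialize (Hu0 u). cbv beta in Hu0. rewrite E0, Eu, !vsub_vzero, !norm_sq in Hu0.
  simpl in Hu0. lra.
Qed.

Hypothesis Hlsc : lsc G.

Lemma lsc_le_of_converges (s : nat -> vec n) x B :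
  converges s x -> (forall k, ele (G (s k)) (Some B)) -> ele (G x) (Some B).
Proof.
  intros Hs HB. destruct (G x) as [gx|] eqn:Ex; simpl;
    [destruct (Rle_dec gx B) as [|Hgt]; auto|]; exfalso;
    (destruct (Hlsc x B) as [delta [Hd Hdelta]]; [rewrite Ex; simpl; lra|]);
    destruct (Hs delta Hd) as [N HN]; specialize (HB N);
    specialize (Hdelta (s N) (HN N (le_n N)));
    destruct (G (s N)); simpl in *; lra.
Qed.

Lemma limiting_subgrad_of_proximal (s vs : nat -> vec n) x v c gx :
  G x = Some gx -> converges s x -> converges vs v ->
  (forall k, proximal_subgrad (s k) (vs k) c) -> limiting_subgrad G x v.
Proof.
  intros Ex Hs Hv Hprox. exists s, vs, gx.
  repeat split; auto; [| intros k; apply (frechet_subgrad_of_proximal _ _ c), Hprox].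
  intros eps He. set (K := norm v + 1 + Rabs c).
  assert (HK : 1 <= K) by (pose proof (norm_ge0 n v); pose proof (Rabs_pos c); unfold K; lra).
  destruct (Hlsc x (gx - eps)) as [delta [Hd Hdelta]]; [rewrite Ex; simpl; lra|].
  set (r := Rmin (Rmin 1 delta) (eps / K)).
  assert (Hr1 : r <= 1) by (unfold r; pose proof (Rmin_l (Rmin 1 delta) (eps / K)); pose proof (Rmin_l 1 delta); lra).
  assert (Hrd : r <= delta) by (unfold r; pose proof (Rmin_l (Rmin 1 delta) (eps / K)); pose proof (Rmin_r 1 delta); lra).
  assert (HrK : r <= eps / K) by apply Rmin_r.
  assert (Hr : 0 < r).
  { unfold r. apply Rmin_glb_lt; [apply Rmin_glb_lt|apply Rdiv_lt_0_compat]; lra. }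
  destruct (Hs r Hr) as [N1 H1]. destruct (Hv 1 ltac:(lra)) as [N2 H2].
  exists (N1 + N2)%nat. intros k Hk.
  specialize (H1 k ltac:(lia)). specialize (H2 k ltac:(lia)).
  set (h := vsub (s k) x) in *. pose proof (norm_ge0 n h) as Hh0.
  assert (HhK : norm h * K < eps).
  { apply Rmult_lt_compat_r with (r := K) in H1; [|lra].
    apply Rmult_le_compat_r with (r := K) in HrK; [|lra].
    replace (eps / K * K) with eps in HrK by (field; lra). lra. }
  assert (Hhd : norm h < delta) by lra. specialize (Hdelta (s k) Hhd). destruct (Hprox k) as [g [Eg Hg]].
  exists g. split; auto. rewrite Eg in Hdelta. simpl in Hdelta.
  specialize (Hg x gx Ex).
  replace (vsub x (s k)) with (vscal (-1) h) in Hg by (apply vec_ext; intros; unfold h, vscal, vsub; ring).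
  rewrite dot_scalr, dot_scall, dot_scalr, <- norm_mul in Hg.
  assert (Hvk : norm (vs k) <= norm v + 1).
  { pose proof (norm_sub_le n (vs k) v vzero). rewrite !vsub_vzero in H. lra. }
  pose proof (dot_le_norm_mul n (vs k) h).
  pose proof (Rle_abs c).
  assert (norm (vs k) * norm h <= (norm v + 1) * norm h) by (apply Rmult_le_compat_r; auto).
  assert (c * (norm h * norm h) <= Rabs c * norm h).
  { apply Rle_trans with (Rabs c * (norm h * norm h)); [apply Rmult_le_compat_r; nra|].
    apply Rmult_le_compat_l; [apply Rabs_pos | nra]. }
  unfold K in HhK. apply Rabs_def1; nra.
Qed.

End ProximalSubgradients.

Section ModifiedPeacemanRachford.
Variables (n : nat) (F : vec n -> R) (gradF : vec n -> vec n) (G : vec n -> ereal)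
  (LF gamma : R) (y z x : nat -> vec n).
Hypotheses (Hconv : convex F) (Hgrad : has_gradient F gradF)
  (HL : 0 < LF) (Hlip : lipschitz gradF LF) (Hprop : proper G)
  (Hg0 : 0 < gamma) (Hg1 : gamma < / (12 * LF)).
Hypothesis Hy : forall t,
  is_argmin_R (fun v => F v + 5 * LF / 2 * norm v ^ 2
                        + / (2 * gamma) * norm (vsub v (x t)) ^ 2) (y (S t)).
Hypothesis Hz : forall t,
  is_argmin (fun w => eplus (G w)
               (- (5 * LF / 2) * norm w ^ 2
                + / (2 * gamma) * norm (vsub (vsub (vscal 2 (y (S t))) (x t)) w) ^ 2))
    (z (S t)).
Hypothesis Hx : forall t, x (S t) = vadd (x t) (vscal 2 (vsub (z (S t)) (y (S t)))).

Definition kappa : R := / (2 * gamma) - 5 * LF / 2.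

Lemma gamma_LF_lt : gamma * LF < / 12.
Proof.
  apply Rmult_lt_compat_r with (r := LF) in Hg1; auto.
  replace (/ (12 * LF) * LF) with (/ 12) in Hg1 by (field; lra). lra.
Qed.

Lemma LF_lt_kappa : LF < kappa.
Proof.
  unfold kappa. pose proof gamma_LF_lt.
  assert (12 * LF < / gamma).
  { apply (Rmult_lt_reg_l gamma); auto. rewrite Rinv_r by lra. lra. }
  replace (/ (2 * gamma)) with (/ 2 * / gamma) by (field; lra). lra.
Qed.

Lemma x_of_y t :
  x t = vadd (y (S t)) (vscal gamma (vadd (gradF (y (S t))) (vscal (5 * LF) (y (S t))))).
Proof.
  set (a := y (S t)). set (xx := x t).
  set (p := vadd (vscal (5 * LF) a) (vscal (/ gamma) (vsub a xx))).
  assert (Hfermat : vadd (gradF a) p = vzero).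
  { apply (argmin_gradient_eq n F gradF Hgrad a p (5 * LF / 2 + / (2 * gamma))).
    intros h. pose proof (Hy t (vadd a h)) as Hmin. cbv beta in Hmin. fold a xx in Hmin.
    enough (E : 5 * LF / 2 * norm (vadd a h) ^ 2 + / (2 * gamma) * norm (vsub (vadd a h) xx) ^ 2
                - (5 * LF / 2 * norm a ^ 2 + / (2 * gamma) * norm (vsub a xx) ^ 2)
                = dot n p h + (5 * LF / 2 + / (2 * gamma)) * dot n h h) by lra.
    rewrite !norm_sq. unfold p. dot_expand.
    rewrite (dot_comm n h a), (dot_comm n xx a), (dot_comm n xx h). field. lra. }
  apply vec_ext. intros i. pose proof (f_equal (fun w => w i) Hfermat) as Hi.
  unfold p, vadd, vscal, vsub, vzero in Hi |- *.
  apply (Rmult_eq_compat_l gamma) in Hi. rewrite Rmult_0_r in Hi.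
  replace (gamma * (gradF a i + (5 * LF * a i + / gamma * (a i - xx i))))
    with (gamma * gradF a i + gamma * (5 * LF * a i) + (a i - xx i)) in Hi by (field; lra).
  lra.
Qed.

Definition z_model (a w : vec n) : R :=
  dot n (gradF a) (vsub w a) + kappa * dot n (vsub w a) (vsub w a).

Lemma z_objective_eq a xx w :
  xx = vadd a (vscal gamma (vadd (gradF a) (vscal (5 * LF) a))) ->
  - (5 * LF / 2) * norm w ^ 2 + / (2 * gamma) * norm (vsub (vsub (vscal 2 a) xx) w) ^ 2
  = - (5 * LF / 2) * norm a ^ 2 + / (2 * gamma) * norm (vsub (vsub (vscal 2 a) xx) a) ^ 2
    + z_model a w.
Proof.
  intros ->. unfold z_model, kappa. rewrite !norm_sq. dot_expand.
  rewrite ?(dot_comm n (gradF a) a), ?(dot_comm n w a), ?(dot_comm n w (gradF a)).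
  set (A := dot n a a); set (B := dot n a (gradF a)); set (C := dot n (gradF a) (gradF a)).
  set (W := dot n w w); set (AW := dot n a w); set (GW := dot n (gradF a) w).
  field. lra.
Qed.

(* The default [0] is never used: [G (z (S t))] is finite (lemma [G_z_finite]). *)
Definition gz (t : nat) : R := match G (z t) with Some g => g | None => 0 end.

Lemma G_z_finite t : G (z (S t)) = Some (gz (S t)).
Proof.
  destruct (argmin_eplus_finite n G _ (z (S t)) Hprop (Hz t)) as [g Eg]. unfold gz. rewrite Eg. auto.
Qed.

Lemma z_minimizes_model t w gw : G w = Some gw ->
  gz (S t) + z_model (y (S t)) (z (S t)) <= gw + z_model (y (S t)) w.
Proof.
  intros Ew. pose proof (argmin_eplus_le n G _ _ _ _ _ (Hz t) (G_z_finite t) Ew) as H.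
  cbv beta in H.
  rewrite (z_objective_eq _ _ w (x_of_y t)), (z_objective_eq _ _ (z (S t)) (x_of_y t)) in H.
  lra.
Qed.

Definition Phi (t : nat) : R := F (y t) + z_model (y t) (z t) + gz t.

Lemma Phi_le_model t w gw : G w = Some gw -> Phi (S t) <= F (y (S t)) + z_model (y (S t)) w + gw.
Proof. intros Ew. pose proof (z_minimizes_model t w gw Ew). unfold Phi. lra. Qed.

(* Subtract the y-step optimality conditions at [t] and [S t] from the x-update. *)
Lemma z_sub_y t : vsub (z (S t)) (y (S t)) =
  vscal (1 / 2) (vadd (vscal (1 + gamma * (5 * LF)) (vsub (y (S (S t))) (y (S t))))
                      (vscal gamma (vsub (gradF (y (S (S t)))) (gradF (y (S t)))))).
Proof.
  apply vec_ext; intros i.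
  pose proof (f_equal (fun f => f i) (Hx t)) as E1.
  pose proof (f_equal (fun f => f i) (x_of_y t)) as E2.
  pose proof (f_equal (fun f => f i) (x_of_y (S t))) as E3.
  cbv beta in *. unfold vadd, vscal, vsub in *. lra.
Qed.

(* The step condition [gamma * LF < 1/12] is exactly what makes the [dot D D] coefficient nonpositive. *)
Lemma model_descent (D e p u : vec n) (f1 f2 : R) :
  u = vscal (1 / 2) (vadd (vscal (1 + gamma * (5 * LF)) D) (vscal gamma e)) ->
  f2 - f1 <= dot n p D ->
  dot n e D <= LF * dot n D D ->
  dot n e e <= LF * LF * dot n D D ->
  f2 + dot n p (vsub u D) + kappa * dot n (vsub u D) (vsub u D)
  <= f1 + dot n (vsub p e) u + kappa * dot n u u - LF * dot n D D.
Proof.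
  intros -> Hf HeD Hee. apply Rminus_le. unfold kappa. dot_expand.
  rewrite ?(dot_comm n D e), ?(dot_comm n D p), ?(dot_comm n e p).
  set (dDD := dot n D D) in *; set (dee := dot n e e) in *; set (deD := dot n e D) in *.
  set (dpD := dot n p D) in *; set (dpe := dot n p e).
  match goal with |- ?l <= 0 => replace l with
    ((f2 - f1 - dpD) + 5 * (gamma * LF) * deD + gamma / 2 * dee
     + LF * (1 - 5 / 2 + 25 / 2 * (gamma * LF)) * dDD) by (field; lra) end.
  pose proof gamma_LF_lt. assert (HD : 0 <= dDD) by apply dot_ge0.
  assert (5 * (gamma * LF) * deD <= 5 * (gamma * LF) * (LF * dDD))
    by (apply Rmult_le_compat_l; nra).
  assert (gamma / 2 * dee <= gamma / 2 * (LF * LF * dDD)) by (apply Rmult_le_compat_l; lra).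
  assert (LF * dDD * (18 * (gamma * LF) - 3 / 2) <= 0).
  { assert (0 <= LF * dDD) by (apply Rmult_le_pos; lra). nra. }
  nra.
Qed.

Lemma Phi_descent t : Phi (S (S t)) <=
  Phi (S t) - LF * dot n (vsub (y (S (S t))) (y (S t))) (vsub (y (S (S t))) (y (S t))).
Proof.
  eapply Rle_trans; [apply (Phi_le_model (S t) (z (S t)) (gz (S t)) (G_z_finite t))|].
  set (y1 := y (S t)). set (y2 := y (S (S t))). set (D := vsub y2 y1).
  set (e := vsub (gradF y2) (gradF y1)).
  assert (Hconvex : F y2 - F y1 <= dot n (gradF y2) D).
  { pose proof (convex_gradient_le n F gradF Hgrad Hconv y1 y2).
    replace (vsub y1 y2) with (vscal (-1) D) in H
      by (apply vec_ext; intros; unfold D, vscal, vsub; ring).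
    rewrite dot_scalr in H. lra. }
  pose proof (model_descent D e (gradF y2) _ (F y1) (F y2) (z_sub_y t) Hconvex
    (lipschitz_dot n gradF LF Hlip y2 y1) (lipschitz_dot_sq n gradF LF Hlip y2 y1)) as Hdesc.
  fold y1 in Hdesc. unfold Phi, z_model. fold y1.
  replace (vsub (z (S t)) y2) with (vsub (vsub (z (S t)) y1) D)
    by (apply vec_ext; intros; unfold D, vsub; ring).
  replace (gradF y1) with (vsub (gradF y2) e) by (apply vec_ext; intros; unfold e, vsub; ring).
  lra.
Qed.

Lemma Phi_le_Phi1 t : Phi (S t) <= Phi 1.
Proof.
  induction t; [lra|]. pose proof (Phi_descent t).
  pose proof (dot_ge0 n (vsub (y (S (S t))) (y (S t)))). nra.
Qed.

Lemma FG_le_Phi t :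
  F (z (S t)) + gz (S t)
  + (kappa - LF) * dot n (vsub (z (S t)) (y (S t))) (vsub (z (S t)) (y (S t)))
  <= Phi (S t).
Proof.
  pose proof (smooth_upper_bound n F gradF Hgrad Hconv LF Hlip (z (S t)) (y (S t))).
  unfold Phi, z_model. lra.
Qed.

Hypothesis Hcoer : coercive F G.

Lemma z_bounded : exists R0, forall t, norm (z (S t)) <= R0.
Proof.
  destruct (Hcoer (Phi 1)) as [r Hr]. exists r. intros t. apply Rnot_lt_le. intros Hzt.
  specialize (Hr _ Hzt). rewrite G_z_finite in Hr. simpl in Hr.
  pose proof (FG_le_Phi t). pose proof (Phi_le_Phi1 t). pose proof LF_lt_kappa.
  pose proof (dot_ge0 n (vsub (z (S t)) (y (S t)))). nra.
Qed.

Lemma F_z_bounded_below : exists mF, forall t, mF <= F (z (S t)).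
Proof.
  destruct z_bounded as [R0 HR0].
  exists (F vzero - / 2 * dot n (gradF vzero) (gradF vzero) - / 2 * (R0 * R0)). intros t.
  pose proof (convex_quadratic_lower_bound n F gradF Hgrad Hconv (z (S t))).
  rewrite <- (norm_mul n (z (S t))) in H. specialize (HR0 t). pose proof (norm_ge0 n (z (S t))). nra.
Qed.

Hypothesis Hprox : forall (w : vec n) (tau : R), 0 < tau ->
  exists u, is_argmin (fun u => eplus (escale tau (G u)) (/ 2 * norm (vsub u w) ^ 2)) u.

Lemma gz_bounded_below : exists mG, forall t, mG <= gz (S t).
Proof.
  destruct (prox_quadratic_lower_bound n G Hprop (Hprox vzero 1 ltac:(lra))) as [m Hm].
  destruct z_bounded as [R0 HR0]. exists (m - / 2 * (R0 * R0)). intros t.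
  specialize (Hm _ _ (G_z_finite t)). rewrite <- norm_mul in Hm.
  specialize (HR0 t). pose proof (norm_ge0 n (z (S t))). nra.
Qed.

Lemma Phi_bounded_below : exists m, forall t, m <= Phi (S t).
Proof.
  destruct F_z_bounded_below as [mF HF]. destruct gz_bounded_below as [mG HG].
  exists (mF + mG). intros t. pose proof (FG_le_Phi t). pose proof LF_lt_kappa.
  specialize (HF t). specialize (HG t).
  pose proof (dot_ge0 n (vsub (z (S t)) (y (S t)))). nra.
Qed.

Lemma gz_bounded_above : exists BG, forall t, gz (S t) <= BG.
Proof.
  destruct F_z_bounded_below as [mF HF]. exists (Phi 1 - mF). intros t.
  pose proof (FG_le_Phi t). pose proof (Phi_le_Phi1 t). pose proof LF_lt_kappa.
  specialize (HF t). pose proof (dot_ge0 n (vsub (z (S t)) (y (S t)))). nra.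
Qed.

Lemma z_sub_y_bounded : exists B, forall t, norm (vsub (z (S t)) (y (S t))) <= B.
Proof.
  destruct F_z_bounded_below as [mF HF]. destruct gz_bounded_below as [mG HG].
  pose proof LF_lt_kappa. exists (1 + (Phi 1 - mF - mG) / (kappa - LF)). intros t.
  set (d := vsub (z (S t)) (y (S t))).
  pose proof (FG_le_Phi t). pose proof (Phi_le_Phi1 t). specialize (HF t). specialize (HG t).
  assert (Hd : dot n d d <= (Phi 1 - mF - mG) / (kappa - LF)).
  { apply (Rmult_le_reg_l (kappa - LF)); [lra|]. fold d in H0.
    replace ((kappa - LF) * ((Phi 1 - mF - mG) / (kappa - LF))) with (Phi 1 - mF - mG)
      by (field; lra). lra. }
  rewrite <- norm_mul in Hd. nra.
Qed.

Lemma y_bounded : exists Ry, forall t, norm (y (S t)) <= Ry.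
Proof.
  destruct z_bounded as [R0 H0]. destruct z_sub_y_bounded as [B H1].
  exists (R0 + B). intros t.
  pose proof (norm_sub_le n (y (S t)) (z (S t)) vzero). rewrite !vsub_vzero, norm_sub_sym in H.
  specialize (H0 t). specialize (H1 t). lra.
Qed.

Lemma x_bounded : exists Rx, forall t, norm (x t) <= Rx.
Proof.
  destruct y_bounded as [Ry HRy].
  exists (Ry + gamma * (norm (gradF vzero) + 6 * LF * Ry)). intros t.
  rewrite (x_of_y t). set (a := y (S t)). specialize (HRy t). fold a in HRy.
  pose proof (norm_add_le n a (vscal gamma (vadd (gradF a) (vscal (5 * LF) a)))).
  rewrite norm_scal, Rabs_pos_eq in H by lra.
  pose proof (norm_add_le n (gradF a) (vscal (5 * LF) a)).
  rewrite norm_scal, Rabs_pos_eq in H0 by lra.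
  pose proof (norm_sub_le n (gradF a) (gradF vzero) vzero). rewrite !vsub_vzero in H1.
  pose proof (Hlip a vzero). rewrite vsub_vzero in H2.
  assert (Hv : norm (vadd (gradF a) (vscal (5 * LF) a)) <= norm (gradF vzero) + 6 * LF * Ry) by nra.
  apply Rmult_le_compat_l with (r := gamma) in Hv; lra.
Qed.

Lemma y_steps_vanish :
  Un_cv (fun t => dot n (vsub (y (S (S t))) (y (S t))) (vsub (y (S (S t))) (y (S t)))) 0.
Proof.
  destruct Phi_bounded_below as [m Hm].
  apply (decrements_vanish (fun t => Phi (S t) / LF) _ (m / LF)).
  - intros t. pose proof (Phi_descent t). unfold Rdiv.
    apply Rmult_le_compat_r with (r := / LF) in H; [|left; apply Rinv_0_lt_compat; lra].
    replace ((Phi (S t) - LF * dot n (vsub (y (S (S t))) (y (S t))) (vsub (y (S (S t))) (y (S t)))) * / LF)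
      with (Phi (S t) * / LF - dot n (vsub (y (S (S t))) (y (S t))) (vsub (y (S (S t))) (y (S t))))
      in H by (field; lra). exact H.
  - intros t. apply dot_ge0.
  - intros t. unfold Rdiv. apply Rmult_le_compat_r; [left; apply Rinv_0_lt_compat; lra | apply Hm].
Qed.

Lemma z_sub_y_vanish : converges (fun t => vsub (z t) (y t)) vzero.
Proof.
  apply converges_shift.
  set (D := fun t => vsub (y (S (S t))) (y (S t))).
  set (e := fun t => vsub (gradF (y (S (S t)))) (gradF (y (S t)))).
  assert (HD : converges D vzero) by (apply converges_vzero_of_dot, y_steps_vanish).
  assert (He : converges e vzero) by (apply (converges_vzero_le n e D LF HD); intros t; apply Hlip).
  replace vzero with (vscal (1 / 2) (vadd (vscal (1 + gamma * (5 * LF)) (@vzero n)) (vscal gamma vzero)))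
    by (apply vec_ext; intros; unfold vscal, vadd, vzero; ring).
  apply converges_ext with (s := fun t => vscal (1 / 2) (vadd (vscal (1 + gamma * (5 * LF)) (D t)) (vscal gamma (e t)))).
  - intros t. symmetry. apply z_sub_y.
  - apply converges_scal, converges_add; apply converges_scal; auto.
Qed.

Definition subgrad_iterate (t : nat) : vec n :=
  vsub (vscal (-1) (gradF (y t))) (vscal (2 * kappa) (vsub (z t) (y t))).

Lemma proximal_subgrad_iterate t :
  (0 < t)%nat -> proximal_subgrad n G (z t) (subgrad_iterate t) kappa.
Proof.
  destruct t as [|t]; [lia|]. intros _.
  apply (proximal_subgrad_of_model_min n G _ _ _ _ _ (G_z_finite t)).
  intros w gw Ew. pose proof (z_minimizes_model t w gw Ew). unfold z_model in H. lra.
Qed.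

Hypothesis Hlsc : lsc G.

Lemma cluster_point_stationary yb zb xb : cluster_point3 y z x yb zb xb ->
  yb = zb /\ limiting_subgrad G zb (vscal (-1) (gradF zb)).
Proof.
  intros [phi [Hphi [Cy [Cz _]]]].
  assert (Hvanish : converges (fun k => vsub (z (phi k)) (y (phi k))) vzero)
    by (apply (converges_subseq n (fun t => vsub (z t) (y t))); auto; apply z_sub_y_vanish).
  assert (Eyz : yb = zb).
  { symmetry. apply norm_sub_eq0. rewrite (converges_unique n _ _ _ (converges_sub n _ _ _ _ Cz Cy) Hvanish).
    apply norm_vzero. }
  split; auto. subst yb.
  (* Shift the subsequence so that all its indices are positive, i.e. genuine iterates. *)
  set (psi := fun k => phi (S k)).
  assert (Hpos : forall k, (0 < psi k)%nat) by (intros k; specialize (Hphi k); unfold psi; lia).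
  assert (HS : forall k, (S k < S (S k))%nat) by (intros; lia).
  assert (Cz' : converges (fun k => z (psi k)) zb) by exact (converges_subseq n _ _ S HS Cz).
  assert (Cy' : converges (fun k => y (psi k)) zb) by exact (converges_subseq n _ _ S HS Cy).
  assert (Cv : converges (fun k => subgrad_iterate (psi k)) (vscal (-1) (gradF zb))).
  { replace (vscal (-1) (gradF zb)) with (vsub (vscal (-1) (gradF zb)) (vscal (2 * kappa) (@vzero n)))
      by (apply vec_ext; intros; unfold vsub, vscal, vzero; ring).
    apply converges_sub; apply converges_scal.
    - apply (converges_lipschitz n gradF LF (fun k => y (psi k))); auto.
    - exact (converges_subseq n _ _ S HS Hvanish). }
  destruct gz_bounded_above as [BG HBG].
  assert (Hfin : ele (G zb) (Some BG)).
  { apply (lsc_le_of_converges n G Hlsc (fun k => z (psi k))); auto. intros k.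
    destruct (psi k) as [|t] eqn:E; [specialize (Hpos k); lia|].
    rewrite G_z_finite. apply HBG. }
  destruct (G zb) as [gzb|] eqn:Ezb; [|contradiction].
  apply (limiting_subgrad_of_proximal n G Hlsc _ _ _ _ kappa gzb Ezb Cz' Cv).
  intros k. apply proximal_subgrad_iterate, Hpos.
Qed.

End ModifiedPeacemanRachford.

Theorem corollary1 (n : nat) (F : vec n -> R) (gradF : vec n -> vec n)
  (G : vec n -> ereal) (LF gamma : R)
  (y z x : nat -> vec n) :
  convex F ->
  has_gradient F gradF ->
  0 < LF ->
  lipschitz gradF LF ->
  proper G ->
  lsc G ->
  (forall (w : vec n) (tau : R), 0 < tau ->
     exists u, is_argmin (fun u => eplus (escale tau (G u)) (/2 * norm (vsub u w) ^ 2)) u) ->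
  coercive F G ->
  0 < gamma -> gamma < / (12 * LF) ->
  (forall t,
     is_argmin_R (fun v => F v + 5 * LF / 2 * norm v ^ 2
                   + / (2 * gamma) * norm (vsub v (x t)) ^ 2) (y (S t))) ->
  (forall t,
     is_argmin (fun w => eplus (G w)
                  (- (5 * LF / 2) * norm w ^ 2
                   + / (2 * gamma) * norm (vsub (vsub (vscal 2 (y (S t))) (x t)) w) ^ 2))
       (z (S t))) ->
  (forall t, x (S t) = vadd (x t) (vscal 2 (vsub (z (S t)) (y (S t))))) ->
  (exists M, forall t, norm (y t) <= M /\ norm (z t) <= M /\ norm (x t) <= M) /\
  (forall yb zb xb, cluster_point3 y z x yb zb xb ->
     yb = zb /\ limiting_subgrad G zb (vscal (-1) (gradF zb))).
Proof.
  intros Hconv Hgrad HL Hlip Hprop Hlsc Hprox Hcoer Hg0 Hg1 Hy Hz Hx. split.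
  - destruct (bounded_of_succ n y (y_bounded n F gradF G LF gamma y z x
      Hconv Hgrad HL Hlip Hprop Hg0 Hg1 Hy Hz Hx Hcoer Hprox)) as [My HMy].
    destruct (bounded_of_succ n z (z_bounded n F gradF G LF gamma y z x
      Hconv Hgrad HL Hlip Hprop Hg0 Hg1 Hy Hz Hx Hcoer)) as [Mz HMz].
    destruct (x_bounded n F gradF G LF gamma y z x
      Hconv Hgrad HL Hlip Hprop Hg0 Hg1 Hy Hz Hx Hcoer Hprox) as [Mx HMx].
    exists (Rmax My (Rmax Mz Mx)). intros t.
    pose proof (Rmax_l My (Rmax Mz Mx)). pose proof (Rmax_r My (Rmax Mz Mx)).
    pose proof (Rmax_l Mz Mx). pose proof (Rmax_r Mz Mx).
    specialize (HMy t). specialize (HMz t). specialize (HMx t). repeat split; lra.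
  - intros yb zb xb. apply (cluster_point_stationary n F gradF G LF gamma y z x
      Hconv Hgrad HL Hlip Hprop Hg0 Hg1 Hy Hz Hx Hcoer Hprox Hlsc).
Qed.
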